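(* Let $\mathcal{M}$ and $\mathcal{M}'$ be MRTA instances with the same robots $R$ and tasks $T$, whose cost functions $c$ and $c'$ are injective on the edge set $E$ of the robot-task graph and differ only in the cost of a single edge $e$. Let $\textsc{Auction}(\mathcal{M})=(W=(w_k),a)$ and let $U=(u_k)$ denote the edges with second-best bids on $\textsc{Auction}(\mathcal{M})$. Then $\textsc{Assign}(\mathcal{M}')=\textsc{Assign}(\mathcal{M})$ if either (1) $e$ does not appear in $W$ and $c'(e)>\max_{k\in B_e}c(w_k)$; (2) $e=w_K\in W$ with $|B_e|=1$ and $c(u_K)>c'(e)\ge0$; or (3) $e=w_K\in W$ with $|B_e|>1$ and $c(u_K)>c'(e)>\max_{k\in B_e\setminus\{K\}}c(w_k)$.
   Context: $R$ (robots) and $T$ (tasks) are finite disjoint sets with $R\neq\emptyset$, $|R\sqcup T|\ge3$. The robot-task graph has vertex set $R\sqcup T$, edge set $E$ consisting of all 2-element subsets of $R\sqcup T$, and non-negative edge costs $c:E\to\mathbb{R}_+$; injective means distinct edges have distinct costs. $\textsc{Auction}(\mathcal{M})$: set $A=\emptyset$ and $a(r)=0$ for all $r\in R$. For $k=1,\dots,|T|$: let $w_k=\{s,t\}$ be the edge with $s\in R\cup A$, $t\in T\setminus A$ minimising $c(\{s,t\})$; set $a(t)=k$ and $A\leftarrow A\cup\{t\}$. Output $W=(w_1,\dots,w_{|T|})$ and $a:R\sqcup T\to\{0,\dots,|T|\}$. $\textsc{DFShortcut}$: the edges of $W$ form a forest each of whose components contains exactly one robot. For each robot $r$ let $V(r)$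 be the vertex set of its component; start with $P(r)=(r)$ and, while $P(r)$ does not contain all of $V(r)$, scan the vertices of $P(r)$ from last to first, and at the first vertex $t$ having a $W$-neighbour not yet in $P(r)$, append the such neighbour $s$ with smallest $a(s)$. Output the plan $\{P(r):r\in R\}$. $\textsc{Assign}(\mathcal{M})$ is the result of applying $\textsc{DFShortcut}$ to $\textsc{Auction}(\mathcal{M})$. For $e=\{x,y\}$, $B_e=\{k\in\mathbb{Z}:\min(a(x),a(y))<k\le\max(a(x),a(y))\}$. The edge with second-best bid in round $k$ is the edge $u_k\ne w_k$ with $k\in B_{u_k}$ such that $c(u_k)\le c(f)$ for all edges $f\ne w_k$ with $k\in B_f$. *)

From HB Require Import structures.
From mathcomp Require Import all_boot all_order all_algebra.
From mathcomp Require Import reals.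
Set Implicit Arguments. Unset Strict Implicit. Unset Printing Implicit Defensive.
Import Order.TTheory GRing.Theory Num.Theory.
Local Open Scope ring_scope.

(* Robots [Rb] and tasks [Tb] are finite types; the vertex set of the
   robot-task graph is the disjoint union [Rb + Tb] (inl = robot, inr = task).
   An edge is a 2-element subset of vertices; costs are functions on sets of
   vertices, only their values on edges matter. *)

Notation vert Rb Tb := (Rb + Tb)%type.

Definition is_edge (Rb Tb : finType) (e : {set vert Rb Tb}) : bool := #|e| == 2%N.

Definition nonneg_costs (R : realType) (Rb Tb : finType)
  (c : {set vert Rb Tb} -> R) : Prop :=
  forall e, is_edge e -> 0 <= c e.

Definition injective_costs (R : realType) (Rb Tb : finType)
  (c : {set vert Rb Tb} -> R) : Prop :=
  forall e f, is_edge e -> is_edge f -> c e = c f -> e = f.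

Definition bid_edge (Rb Tb : finType) (p : vert Rb Tb * Tb) : {set vert Rb Tb} :=
  [set p.1; inr p.2].

(* candidate bids in a round where A is the set of assigned tasks:
   s in R \cup A, t in T \ A *)
Definition candidate (Rb Tb : finType) (A : {set Tb}) (p : vert Rb Tb * Tb) : bool :=
  [&& (match p.1 with inl _ => true | inr t' => t' \in A end) & p.2 \notin A].

(* the candidate bid minimising the cost (unique when costs are injective) *)
Definition best_bid (R : realType) (Rb Tb : finType)
  (c : {set vert Rb Tb} -> R) (A : {set Tb}) : option (vert Rb Tb * Tb) :=
  [pick p | candidate A p &&
     [forall q, candidate A q ==> (c (bid_edge p) <= c (bid_edge q))]].

Fixpoint auction_rec (R : realType) (Rb Tb : finType)
  (c : {set vert Rb Tb} -> R) (n : nat) (A : {set Tb}) : seq (vert Rb Tb * Tb) :=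
  match n with
  | 0 => [::]
  | n'.+1 =>
      match best_bid c A with
      | Some p => p :: auction_rec c n' (p.2 |: A)
      | None => [::]
      end
  end.

Definition auction_bids (R : realType) (Rb Tb : finType)
  (c : {set vert Rb Tb} -> R) : seq (vert Rb Tb * Tb) :=
  auction_rec c #|Tb| set0.

Definition auction_W (R : realType) (Rb Tb : finType)
  (c : {set vert Rb Tb} -> R) : seq {set vert Rb Tb} :=
  map (@bid_edge Rb Tb) (auction_bids c).

(* w_k, for 1 <= k <= |T| (1-indexed) *)
Definition w_round (R : realType) (Rb Tb : finType)
  (c : {set vert Rb Tb} -> R) (k : nat) : {set vert Rb Tb} :=
  nth set0 (auction_W c) k.-1.

(* the labelling a : R \sqcup T -> {0, ..., |T|}: a(r) = 0, a(t) = k if t was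
   assigned in round k *)
Definition auction_a (R : realType) (Rb Tb : finType)
  (c : {set vert Rb Tb} -> R) (v : vert Rb Tb) : nat :=
  match v with
  | inl _ => 0%N
  | inr t => (index t (unzip2 (auction_bids c))).+1
  end.

Definition wadj (Rb Tb : finType) (W : seq (vert Rb Tb * Tb)) : rel (vert Rb Tb) :=
  fun u v => has (fun p => ((p.1 == u) && (inr p.2 == v)) ||
                           ((p.1 == v) && (inr p.2 == u))) W.

Definition dfs_step (Rb Tb : finType) (W : seq (vert Rb Tb * Tb))
  (a : vert Rb Tb -> nat) (Vr : {set vert Rb Tb}) (P : seq (vert Rb Tb))
  : seq (vert Rb Tb) :=
  if Vr \subset P then P else
  match [seq v <- rev P | has (fun s => wadj W v s && (s \notin P)) (enum [set: vert Rb Tb])] with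
  | t :: _ =>
      match sort (fun x y => (a x <= a y)%N)
                 [seq s <- enum [set: vert Rb Tb] | wadj W t s && (s \notin P)] with
      | s :: _ => rcons P s
      | [::] => P
      end
  | [::] => P
  end.

Definition comp_of (Rb Tb : finType) (W : seq (vert Rb Tb * Tb)) (r : Rb)
  : {set vert Rb Tb} :=
  [set v | connect (wadj W) (inl r) v].

(* DFShortcut applied to (W, a); each step adds one vertex, so
   #|R \sqcup T| iterations suffice to finish the while loop *)
Definition dfshortcut (Rb Tb : finType) (W : seq (vert Rb Tb * Tb))
  (a : vert Rb Tb -> nat) : {ffun Rb -> seq (vert Rb Tb)} :=
  [ffun r => iter #|[set: vert Rb Tb]| (dfs_step W a (comp_of W r)) [:: inl r]].

Definition assign (R : realType) (Rb Tb : finType)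
  (c : {set vert Rb Tb} -> R) : {ffun Rb -> seq (vert Rb Tb)} :=
  dfshortcut (auction_bids c) (auction_a c).

Definition inB (R : realType) (Rb Tb : finType)
  (c : {set vert Rb Tb} -> R) (e : {set vert Rb Tb}) (k : nat) : bool :=
  [exists x in e, exists y in e, (auction_a c x < k <= auction_a c y)%N].

Definition B_seq (R : realType) (Rb Tb : finType)
  (c : {set vert Rb Tb} -> R) (e : {set vert Rb Tb}) : seq nat :=
  [seq k <- iota 0 (\max_(v in e) auction_a c v).+1 | inB c e k].

Definition second_best (R : realType) (Rb Tb : finType)
  (c : {set vert Rb Tb} -> R) (k : nat) (u : {set vert Rb Tb}) : Prop :=
  [/\ is_edge u, u != w_round c k, inB c u k &
      forall f, is_edge f -> f != w_round c k -> inB c f k -> c u <= c f].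

From HB Require Import structures.
From mathcomp Require Import all_boot all_order all_algebra.
From mathcomp Require Import reals.
Import Order.TTheory GRing.Theory Num.Theory.
Set Implicit Arguments. Unset Strict Implicit. Unset Printing Implicit Defensive.
Local Open Scope ring_scope.

(* Changing the cost of the single edge e can only change the winner of a
   round of the auction in which e either wins or competes, i.e. a round of
   B_e.  In a round k of B_e won by w_k <> e the new bid c'(e) stays above
   c(w_k); in the round K won by e = w_K it stays below the second-best bid
   c(u_K).  So every round has the same winner, Auction returns the same
   (W, a), and Assign, which only depends on (W, a), is unchanged. *)

Definition assigned_after (Rb Tb : finType) (s : seq (vert Rb Tb * Tb))
    (A : {set Tb}) (j : nat) : {set Tb} :=
  A :|: [set t | t \in take j (unzip2 s)].

Lemma assigned_after0 (Rb Tb : finType) (s : seq (vert Rb Tb * Tb)) A :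
  assigned_after s A 0 = A.
Proof. by apply/setP=> t; rewrite !inE take0 orbF. Qed.

Lemma assigned_after_cons (Rb Tb : finType) p (s : seq (vert Rb Tb * Tb)) A j :
  assigned_after (p :: s) A j.+1 = assigned_after s (p.2 |: A) j.
Proof. by apply/setP=> t; rewrite !inE orbA (orbC (t == _)). Qed.

Section Candidates.

Variables (Rb Tb : finType).
Implicit Types (A : {set Tb}) (p q : vert Rb Tb * Tb).

Lemma candidate_neq A p : candidate A p -> p.1 != inr p.2.
Proof.
case: p => [[r|t'] t] /andP [] //= t'A tA.
by apply/eqP=> [[t't]]; rewrite -t't t'A in tA.
Qed.

Lemma candidate_edge A p : candidate A p -> is_edge (bid_edge p).
Proof. by move=> /candidate_neq p12; rewrite /is_edge /bid_edge cards2 p12. Qed.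

Lemma candidate_bid_edge_inj A p q :
  candidate A p -> candidate A q -> bid_edge p = bid_edge q -> p = q.
Proof.
case: p q => s t [s' t'] Hp Hq pq.
have /andP [/= _ tA] := Hp; have /andP [/= s'A _] := Hq.
have : inr t \in bid_edge (s', t') by rewrite -pq !inE eqxx orbT.
rewrite !inE /= => /orP [/eqP ts'|/eqP [tt']]; first by rewrite -ts' (negbTE tA) in s'A.
subst t'.
have : s \in bid_edge (s', t) by rewrite -pq !inE eqxx.
rewrite !inE => /orP [/eqP -> //|/eqP st].
by have := candidate_neq Hp; rewrite /= st eqxx.
Qed.

End Candidates.

Section BestBid.

Variables (R : realType) (Rb Tb : finType).
Implicit Types (c : {set vert Rb Tb} -> R) (A : {set Tb}) (p q : vert Rb Tb * Tb).

Lemma best_bidP c A p :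
  best_bid c A = Some p ->
  candidate A p /\ forall q, candidate A q -> c (bid_edge p) <= c (bid_edge q).
Proof.
rewrite /best_bid; case: pickP => // p' /andP [Hp' /forallP p'min] [<-].
by split=> // q; apply/implyP.
Qed.

Lemma best_bid_None c A : best_bid c A = None <-> forall p, ~~ candidate A p.
Proof.
rewrite /best_bid; case: pickP => [p /andP [Hp _]|nobest]; split=> //.
  by move=> /(_ p); rewrite Hp.
move=> _ p; apply/negP=> Hp.
case: (arg_minP (c \o (@bid_edge Rb Tb)) Hp) => q Hq qmin.
move/negbT/negP: (nobest q); apply; rewrite Hq.
by apply/forallP=> q'; apply/implyP; exact: qmin.
Qed.

Lemma best_bid_Some_costs c c' A p :
  injective_costs c' -> best_bid c A = Some p ->
  (forall q, candidate A q -> c' (bid_edge p) <= c' (bid_edge q)) ->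
  best_bid c' A = Some p.
Proof.
move=> c'_inj /best_bidP [Hp _] pmin; rewrite /best_bid; case: pickP.
  move=> q /andP [Hq /forallP qmin]; congr Some.
  apply: (candidate_bid_edge_inj Hq Hp).
  apply: c'_inj; [exact: candidate_edge Hq|exact: candidate_edge Hp|].
  by apply/le_anti; rewrite (implyP (qmin p) Hp) pmin.
move=> /(_ p); rewrite Hp /= => /negP []; apply/forallP=> q; apply/implyP.
exact: pmin.
Qed.

Lemma best_bid_None_costs c c' A : best_bid c A = None -> best_bid c' A = None.
Proof. by rewrite !best_bid_None. Qed.

Lemma best_bid_auction_rec c n A j x0 :
  (j < size (auction_rec c n A))%N ->
  best_bid c (assigned_after (auction_rec c n A) A j) =
    Some (nth x0 (auction_rec c n A) j).
Proof.
elim: n A j => [|n IH] A j //=.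
case best: (best_bid c A) => [p|] //= lt_j.
case: j lt_j => [|j] lt_j; first by rewrite assigned_after0.
by rewrite assigned_after_cons IH.
Qed.

Lemma best_bid_auction_rec_size c n A :
  (size (auction_rec c n A) < n)%N ->
  best_bid c (assigned_after (auction_rec c n A) A (size (auction_rec c n A))) = None.
Proof.
elim: n A => [|n IH] A //=.
case best: (best_bid c A) => [p|] //=; last by rewrite assigned_after0.
by rewrite assigned_after_cons => /IH.
Qed.

Lemma eq_auction_rec c c' n A :
  (forall j, (j < n)%N -> (j <= size (auction_rec c n A))%N ->
     best_bid c' (assigned_after (auction_rec c n A) A j) =
     best_bid c (assigned_after (auction_rec c n A) A j)) ->
  auction_rec c' n A = auction_rec c n A.
Proof.
elim: n A => [|n IH] A //= same_best.
have := same_best 0%N isT isT; rewrite !assigned_after0 => ->.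
case best: (best_bid c A) => [p|] //=; congr cons; apply: IH => j lt_jn le_js.
by have := same_best j.+1 lt_jn; rewrite best /= assigned_after_cons; exact.
Qed.

End BestBid.

Section AuctionRun.

Variables (R : realType) (Rb Tb : finType) (c : {set vert Rb Tb} -> R).

Local Notation bids := (auction_bids c).
Local Notation assigned j := (assigned_after (auction_bids c) set0 j).

Lemma best_bid_round j x0 :
  (j < size bids)%N -> best_bid c (assigned j) = Some (nth x0 bids j).
Proof. exact: best_bid_auction_rec. Qed.

Lemma best_bid_after_auction :
  (size bids < #|Tb|)%N -> best_bid c (assigned (size bids)) = None.
Proof. exact: best_bid_auction_rec_size. Qed.

Lemma candidate_round j x0 : (j < size bids)%N -> candidate (assigned j) (nth x0 bids j).
Proof. by move=> lt_j; case: (best_bidP (best_bid_round x0 lt_j)). Qed.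

Lemma auction_a_assigned j t : t \in assigned j -> (auction_a c (inr t) <= j)%N.
Proof.
rewrite !inE /= => tj; rewrite -(cat_take_drop j (unzip2 bids)) index_cat tj.
by rewrite (leq_trans _ (geq_minl j (size (unzip2 bids)))) // -size_take_min index_mem.
Qed.

Lemma auction_a_unassigned j t :
  (j <= size bids)%N -> t \notin assigned j -> (j < auction_a c (inr t))%N.
Proof.
rewrite !inE /= ltnS => le_j tj; rewrite -(cat_take_drop j (unzip2 bids)).
by rewrite index_cat (negbTE tj) size_takel ?size_map ?leq_addr.
Qed.

Lemma candidate_auction_a j q :
  (j <= size bids)%N -> candidate (assigned j) q ->
  (auction_a c q.1 <= j)%N /\ (j < auction_a c (inr q.2))%N.
Proof.
case: q => [[r|t'] t] le_j /andP [/= t'j tj].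
  by split; last exact: auction_a_unassigned.
by split; [exact: auction_a_assigned|exact: auction_a_unassigned].
Qed.

Lemma candidate_inB j q :
  (j <= size bids)%N -> candidate (assigned j) q -> inB c (bid_edge q) j.+1.
Proof.
move=> le_j /(candidate_auction_a le_j) [q1j jq2].
apply/existsP; exists q.1; rewrite !inE eqxx /=.
by apply/existsP; exists (inr q.2); rewrite !inE eqxx orbT ltnS q1j jq2.
Qed.

Lemma w_round_nth j x0 :
  (j < size bids)%N -> w_round c j.+1 = bid_edge (nth x0 bids j).
Proof. by move=> lt_j; rewrite /w_round /auction_W (nth_map x0). Qed.

Lemma auction_a_winner j x0 :
  (j < size bids)%N -> auction_a c (inr (nth x0 bids j).2) = j.+1.
Proof.
move=> lt_j; apply/eqP; rewrite eqn_leq; apply/andP; split; last first.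
  by case: (candidate_auction_a (ltnW lt_j) (candidate_round x0 lt_j)).
apply: auction_a_assigned.
by rewrite !inE /= (take_nth x0.2) ?size_map // mem_rcons inE (nth_map x0) // eqxx.
Qed.

Lemma auction_a_w_round j v :
  (j < size bids)%N -> v \in w_round c j.+1 -> (auction_a c v <= j.+1)%N.
Proof.
move=> lt_j; have x0 : vert Rb Tb * Tb by case: bids lt_j.
rewrite (w_round_nth x0 lt_j) !inE => /orP [/eqP ->|/eqP ->].
  by case: (candidate_auction_a (ltnW lt_j) (candidate_round x0 lt_j)) => /leqW.
by rewrite auction_a_winner.
Qed.

Lemma w_round_max_auction_a j :
  (j < size bids)%N -> exists2 v, v \in w_round c j.+1 & auction_a c v = j.+1.
Proof.
move=> lt_j; have x0 : vert Rb Tb * Tb by case: bids lt_j.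
exists (inr (nth x0 bids j).2); last exact: auction_a_winner.
by rewrite (w_round_nth x0 lt_j) !inE eqxx orbT.
Qed.

Lemma w_round_inj K K' :
  (0 < K <= size (auction_W c))%N -> (0 < K' <= size (auction_W c))%N ->
  w_round c K = w_round c K' -> K = K'.
Proof.
rewrite size_map; case: K K' => [|j] [|j'] //= lt_j lt_j' wjj'.
have le_jj' : forall i i', (i < size bids)%N -> (i' < size bids)%N ->
    w_round c i.+1 = w_round c i'.+1 -> (i.+1 <= i'.+1)%N.
  move=> i i' lt_i lt_i' wii'.
  have [v vi <-] := w_round_max_auction_a lt_i.
  by apply: auction_a_w_round lt_i' _; rewrite -wii'.
by apply/eqP; rewrite eqn_leq !le_jj'.
Qed.

Lemma w_round_mem K : (0 < K <= size (auction_W c))%N -> w_round c K \in auction_W c.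
Proof. by case: K => [|K] //= lt_K; apply: mem_nth. Qed.

Lemma inB_B_seq f k : inB c f k -> k \in B_seq c f.
Proof.
move=> fk; rewrite mem_filter fk mem_iota add0n ltnS.
case/existsP: fk => x /andP [xf /existsP [y /andP [yf /andP [_ le_ky]]]].
exact: leq_trans le_ky (leq_bigmax_cond _ yf).
Qed.

Lemma inB_w_round K : (0 < K <= size (auction_W c))%N -> inB c (w_round c K) K.
Proof.
case: K => [|j] //; rewrite size_map /= => lt_j.
have x0 : vert Rb Tb * Tb by case: bids lt_j.
by rewrite (w_round_nth x0 lt_j); apply: candidate_inB (ltnW lt_j) (candidate_round x0 lt_j).
Qed.

Lemma second_best_le K f :
  is_edge f -> f != w_round c K -> inB c f K ->
  exists2 u, second_best c K u & c u <= c f.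
Proof.
move=> f_edge f_neq fK.
pose P g := [&& is_edge g, g != w_round c K & inB c g K].
have Pf : P f by rewrite /P f_edge f_neq fK.
case: (arg_minP c Pf) => u /and3P [u_edge u_neq uK] umin.
exists u; last exact: umin.
by split=> // g g_edge g_neq gK; apply: umin; rewrite /P g_edge g_neq gK.
Qed.

End AuctionRun.

Section SingleEdgePerturbation.

Variables (R : realType) (Rb Tb : finType) (c c' : {set vert Rb Tb} -> R).
Variable e : {set vert Rb Tb}.

Hypothesis c'_inj : injective_costs c'.
Hypothesis c'_off_e : forall f, is_edge f -> f != e -> c' f = c f.
Hypothesis e_above_winners :
  forall k, k \in B_seq c e -> w_round c k != e -> c (w_round c k) <= c' e.
Hypothesis e_below_second_best :
  forall K, (0 < K <= size (auction_W c))%N -> e = w_round c K ->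
  forall u, second_best c K u -> c' e <= c u.

Local Notation bids := (auction_bids c).
Local Notation assigned j := (assigned_after (auction_bids c) set0 j).

Lemma winner_cheapest_perturbed j x0 q :
  (j < size bids)%N -> candidate (assigned j) q ->
  c' (bid_edge (nth x0 bids j)) <= c' (bid_edge q).
Proof.
move=> lt_j Hq; have [Hp pmin] := best_bidP (best_bid_round x0 lt_j).
set p := nth x0 bids j in Hp pmin *.
have wp : w_round c j.+1 = bid_edge p by exact: w_round_nth.
have qj := candidate_inB (ltnW lt_j) Hq.
have p_edge := candidate_edge Hp; have q_edge := candidate_edge Hq.
have ranged : (0 < j.+1 <= size (auction_W c))%N by rewrite size_map.
have [pe|pe] := eqVneq (bid_edge p) e; have [qe|qe] := eqVneq (bid_edge q) e.
- by rewrite pe qe.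
- have [|u u2nd uq] := second_best_le q_edge _ qj; first by rewrite wp pe.
  rewrite (c'_off_e q_edge qe) pe (le_trans _ uq) //.
  by apply: e_below_second_best u2nd; rewrite // wp.
- rewrite (c'_off_e p_edge pe) qe -wp e_above_winners ?wp //.
  by apply: inB_B_seq; rewrite -qe.
- by rewrite (c'_off_e p_edge pe) (c'_off_e q_edge qe) pmin.
Qed.

Lemma auction_bids_perturbed : auction_bids c' = bids.
Proof.
apply: eq_auction_rec => j lt_jT; rewrite -/bids leq_eqVlt => /orP [/eqP j_end|lt_j].
  rewrite j_end in lt_jT *.
  have best0 := best_bid_after_auction lt_jT.
  by rewrite best0; apply: best_bid_None_costs best0.
have x0 : vert Rb Tb * Tb by case: bids lt_j.
rewrite (best_bid_round x0 lt_j); apply: best_bid_Some_costs c'_inj _ _.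
  exact: best_bid_round.
by move=> q; apply: winner_cheapest_perturbed.
Qed.

End SingleEdgePerturbation.

Theorem corollary8 (R : realType) (Rb Tb : finType)
  (c c' : {set vert Rb Tb} -> R) (e : {set vert Rb Tb}) :
  (0 < #|Rb|)%N ->
  (3 <= #|Rb| + #|Tb|)%N ->
  nonneg_costs c -> nonneg_costs c' ->
  injective_costs c -> injective_costs c' ->
  is_edge e ->
  (forall f, is_edge f -> f != e -> c' f = c f) ->
  ( (* (1) *)
    (e \notin auction_W c /\ (forall k, k \in B_seq c e -> c (w_round c k) < c' e))
    \/
    (* (2) *)
    (exists K : nat, [/\ (0 < K <= size (auction_W c))%N, e = w_round c K,
        size (B_seq c e) = 1%N,
        (forall u, second_best c K u -> c' e < c u) & 0 <= c' e])
    \/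
    (* (3) *)
    (exists K : nat, [/\ (0 < K <= size (auction_W c))%N, e = w_round c K,
        (1 < size (B_seq c e))%N,
        (forall u, second_best c K u -> c' e < c u) &
        (forall k, k \in B_seq c e -> k != K -> c (w_round c k) < c' e)]) ) ->
  assign c' = assign c.
Proof.
move=> _ _ _ _ _ c'_inj _ c'_off_e cases.
suff same_bids : auction_bids c' = auction_bids c by rewrite /assign /auction_a same_bids.
apply: auction_bids_perturbed c'_inj c'_off_e _ _ => [k k_Be wk_e|K K_ranged eK u u2nd].
  apply: ltW; case: cases => [[_ ->] //|[[K [K_ranged eK B1 _ _]]|[K [_ eK _ _ -> //]]]].
    have K_Be : K \in B_seq c e by rewrite eK inB_B_seq ?inB_w_round.
    move: k_Be K_Be B1; case: (B_seq c e) => [|k' [|]] //=.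
    by rewrite !inE => /eqP kk' /eqP Kk'; rewrite kk' -Kk' -eK eqxx in wk_e.
  by apply: contra_neq wk_e => ->; rewrite eK.
have K'_eq K' : (0 < K' <= size (auction_W c))%N -> e = w_round c K' -> K' = K.
  by move=> K'_ranged eK'; apply: (w_round_inj K'_ranged K_ranged); rewrite -eK' -eK.
apply: ltW; case: cases => [[eW _]|[[K' [K'_ranged eK' _ e2nd _]]|[K' [K'_ranged eK' _ e2nd _]]]].
- by rewrite eK w_round_mem in eW.
- by apply: e2nd; rewrite (K'_eq K').
- by apply: e2nd; rewrite (K'_eq K').
Qed.
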